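(* Let $r=\dfrac{4(3s^2-4s+2)}{s^2+4s+6}$ and $$y=\frac{(s+1)(7s^4+16s^3+4s^2-4)\,r}{s^3(s-2)(s^4-4s^2+32s-28)},\qquad t=\left(\frac{(s+1)^2\,r}{(s-2)^2s^2}\right)^2.$$ Then $y(t)$ is a solution of $\mathrm{P}_{\mathrm{VI}}$ with parameters $(\theta_1,\theta_2,\theta_3,\theta_4)=(1/3,1/2,1/2,2/3)$.
   Context: $\mathrm{P}_{\mathrm{VI}}$ is the equation $$\frac{d^2y}{dt^2}=\frac12\Big(\frac1y+\frac1{y-1}+\frac1{y-t}\Big)\Big(\frac{dy}{dt}\Big)^2-\Big(\frac1t+\frac1{t-1}+\frac1{y-t}\Big)\frac{dy}{dt}+\frac{y(y-1)(y-t)}{t^2(t-1)^2}\Big(\alpha+\beta\frac{t}{y^2}+\gamma\frac{t-1}{(y-1)^2}+\delta\frac{t(t-1)}{(y-t)^2}\Big),$$ with $\alpha=(\theta_4-1)^2/2$, $\beta=-\theta_1^2/2$, $\gamma=\theta_3^2/2$, $\delta=(1-\theta_2^2)/2$. When $y,t$ are given as rational functions of a parameter on a curve, derivatives with respect to $t$ are computed via the chain rule. *)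

From Stdlib Require Import Reals.
From Coquelicot Require Import Coquelicot.
Open Scope R_scope.

Definition PVI_rhs (th1 th2 th3 th4 t y y1 : R) : R :=
  let alpha := (th4 - 1)^2 / 2 in
  let beta := - th1^2 / 2 in
  let gamma := th3^2 / 2 in
  let delta := (1 - th2^2) / 2 in
  1/2 * (1/y + 1/(y-1) + 1/(y-t)) * y1^2
  - (1/t + 1/(t-1) + 1/(y-t)) * y1
  + y*(y-1)*(y-t)/(t^2*(t-1)^2) *
    (alpha + beta * t / y^2 + gamma * (t-1)/(y-1)^2 + delta * t*(t-1)/(y-t)^2).

(* The curve s |-> (t(s), y(s)) satisfies P_VI at parameter value s, where
   d/dt is computed by the chain rule: dy/dt = y'(s)/t'(s),
   d^2y/dt^2 = (d/ds (y'(s)/t'(s))) / t'(s). *)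
Definition PVI_param_holds (th1 th2 th3 th4 : R) (T Y : R -> R) (s : R) : Prop :=
  let y1 := Derive Y s / Derive T s in
  let y2 := Derive (fun u => Derive Y u / Derive T u) s / Derive T s in
  y2 = PVI_rhs th1 th2 th3 th4 (T s) (Y s) y1.

Definition r10 (s : R) : R := 4 * (3*s^2 - 4*s + 2) / (s^2 + 4*s + 6).

Definition y10 (s : R) : R :=
  (s+1) * (7*s^4 + 16*s^3 + 4*s^2 - 4) * r10 s
  / (s^3 * (s-2) * (s^4 - 4*s^2 + 32*s - 28)).

Definition t10 (s : R) : R :=
  ((s+1)^2 * r10 s / ((s-2)^2 * s^2))^2.

From Stdlib Require Import Reals Lra Psatz.
From Coquelicot Require Import Coquelicot.
Open Scope R_scope.

(* y and t are rational in s, so by the chain rule dy/dt and d^2y/dt^2 are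
   rational in s as well.  Their closed forms below were found by computer
   algebra; here each one is certified by [auto_derive] followed by [field].
   Multiplying P_VI by 2 y (y-1) (y-t) t^2 (t-1)^2 turns it into a polynomial
   relation between t, y, y', y'', and after substituting the closed forms
   that relation is a rational identity in s, again checked by [field]. *)

Definition PVI_cleared (th1 th2 th3 th4 t y y1 y2 : R) : R :=
  2*y*(y-1)*(y-t)*t^2*(t-1)^2*y2
  - t^2*(t-1)^2*((y-1)*(y-t) + y*(y-t) + y*(y-1))*y1^2
  + 2*y*(y-1)*t*(t-1)*((t-1)*(y-t) + t*(y-t) + t*(t-1))*y1
  - ((th4-1)^2*y^2*(y-1)^2*(y-t)^2 - th1^2*t*(y-1)^2*(y-t)^2
     + th3^2*(t-1)*y^2*(y-t)^2 + (1-th2^2)*t*(t-1)*y^2*(y-1)^2).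

Lemma PVI_rhs_of_cleared th1 th2 th3 th4 t y y1 y2 :
  t <> 0 -> t <> 1 -> y <> 0 -> y <> 1 -> y <> t ->
  PVI_cleared th1 th2 th3 th4 t y y1 y2 = 0 ->
  y2 = PVI_rhs th1 th2 th3 th4 t y y1.
Proof.
  intros Ht0 Ht1 Hy0 Hy1 Hyt Hcl.
  assert (Ht1' : t - 1 <> 0) by lra.
  assert (Hy1' : y - 1 <> 0) by lra.
  assert (Hyt' : y - t <> 0) by lra.
  apply Rminus_diag_uniq.
  transitivity (PVI_cleared th1 th2 th3 th4 t y y1 y2
                / (2*y*(y-1)*(y-t)*t^2*(t-1)^2)).
  - unfold PVI_cleared, PVI_rhs. field. repeat split; auto.
  - rewrite Hcl. unfold Rdiv. ring.
Qed.

Lemma locally_neq0 (f : R -> R) x :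
  continuous f x -> f x <> 0 -> locally x (fun u => f u <> 0).
Proof.
  intros Hc Hfx. apply (Hc (fun v => v <> 0)).
  exists (mkposreal _ (Rabs_pos_lt _ Hfx)). intros v Hv Hv0.
  change (Rabs (v - f x) < Rabs (f x)) in Hv.
  rewrite Hv0, Rminus_0_l, Rabs_Ropp in Hv. lra.
Qed.

Lemma Derive_ratio_Derive (Y T Y1 T1 : R -> R) s l :
  locally s (fun u => is_derive Y u (Y1 u) /\ is_derive T u (T1 u)) ->
  is_derive (fun u => Y1 u / T1 u) s l ->
  Derive (fun u => Derive Y u / Derive T u) s = l.
Proof.
  intros Hloc Hd. rewrite <- (is_derive_unique _ _ _ Hd).
  apply Derive_ext_loc. revert Hloc. apply filter_imp.
  intros u [HY HT]. now rewrite (is_derive_unique _ _ _ HY),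
                                (is_derive_unique _ _ _ HT).
Qed.

Lemma r10_den_neq0 u : u^2 + 4*u + 6 <> 0.
Proof. assert (0 <= (u+2)^2) by apply pow2_ge_0. nra. Qed.

Lemma r10_num_neq0 u : 3*u^2 - 4*u + 2 <> 0.
Proof. assert (0 <= (3*u-2)^2) by apply pow2_ge_0. nra. Qed.

Definition y10_deriv_num (u : R) : R :=
  32256 - 63488*u + 3840*u^2 + 49152*u^3 - 7808*u^4 - 53760*u^5
  + 175296*u^6 + 12288*u^7 - 87648*u^8 - 13440*u^9 + 976*u^10
  + 3072*u^11 - 120*u^12 - 992*u^13 - 252*u^14.

Definition y10_deriv (u : R) : R :=
  y10_deriv_num u
  / (u^4*(u-2)^2*(u^4 - 4*u^2 + 32*u - 28)^2*(u^2 + 4*u + 6)^2).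

Definition t10_deriv_factor (u : R) : R :=
  u^6 + 2*u^5 + 2*u^4 + 8*u^3 - 4*u^2 + 8*u - 8.

Definition t10_deriv (u : R) : R :=
  -192*(u+1)^3*(3*u^2 - 4*u + 2)*t10_deriv_factor u
  / (u^5*(u-2)^5*(u^2 + 4*u + 6)^3).

Definition slope10 (u : R) : R := y10_deriv u / t10_deriv u.

Definition slope10_deriv_num (u : R) : R :=
  133177540608 - 860369190912*u + 2466426912768*u^2 - 4354492858368*u^3
  + 6113810448384*u^4 - 9412949311488*u^5 + 19593003270144*u^6
  - 34456442241024*u^7 + 34272590168064*u^8 - 13156686495744*u^9
  - 3071191547904*u^10 + 269425311744*u^11 + 6279058685952*u^12
  - 5398297313280*u^13 + 1387546804224*u^14 + 1105770577920*u^15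
  - 2149059723264*u^16 + 945193353216*u^17 + 506658914304*u^18
  - 358887456768*u^19 + 24429428736*u^20 + 13130366976*u^21
  - 12359663616*u^22 - 4158259200*u^23 + 4320915456*u^24
  + 2131107840*u^25 - 821262336*u^26 - 416514048*u^27 + 62128128*u^28
  + 31291392*u^29 + 556032*u^30 + 774144*u^31 + 145152*u^32.

Definition slope10_deriv (u : R) : R :=
  slope10_deriv_num u
  / (36864*t10_deriv_factor u^2*(u^4 - 4*u^2 + 32*u - 28)^3*(u+1)^4
     *(3*u^2 - 4*u + 2)^2).

(* Splits a goal [p <> 0], [p] a product of powers, into its factors, each
   closed by a hypothesis up to [ring] or [lra]. *)
Ltac neq0_factor :=
  match goal with |- ?e <> 0 => first
  [ exact R1_neq_R0 | assumption
  | let He := fresh in intro He;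
    match goal with H : ?q <> 0 |- _ => apply H; transitivity e; [ring | exact He] end
  | let He := fresh in intro He;
    match goal with H : ?a <> ?b |- _ => apply H; lra end ] end.

Ltac neq0 :=
  repeat split;
  repeat first [ apply Rmult_integral_contrapositive_currified
               | apply pow_nonzero | apply Rinv_neq_0_compat ];
  neq0_factor.

Section Curve10.

Variable u : R.
Hypothesis u_neq0 : u <> 0.
Hypothesis u_neq2 : u <> 2.

Let u2_neq0 : u - 2 <> 0. Proof. lra. Qed.
Let den_neq0 := r10_den_neq0 u.
Let num_neq0 := r10_num_neq0 u.

Lemma is_derive_t10 : is_derive t10 u (t10_deriv u).
Proof.
  unfold t10, r10, t10_deriv, t10_deriv_factor. auto_derive.
  - neq0.
  - field; neq0.
Qed.

Hypothesis quartic_neq0 : u^4 - 4*u^2 + 32*u - 28 <> 0.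

Lemma is_derive_y10 : is_derive y10 u (y10_deriv u).
Proof.
  unfold y10, r10, y10_deriv, y10_deriv_num. auto_derive.
  - neq0.
  - field; neq0.
Qed.

Hypothesis u1_neq0 : u + 1 <> 0.
Hypothesis factor_neq0 : t10_deriv_factor u <> 0.

Lemma is_derive_slope10 : is_derive slope10 u (slope10_deriv u).
Proof.
  unfold slope10, y10_deriv, t10_deriv, slope10_deriv, slope10_deriv_num,
    y10_deriv_num, t10_deriv_factor in *.
  auto_derive.
  - neq0.
  - field; neq0.
Qed.

Lemma PVI_cleared10 :
  PVI_cleared (1/3) (1/2) (1/2) (2/3) (t10 u) (y10 u)
    (slope10 u) (slope10_deriv u / t10_deriv u) = 0.
Proof.
  unfold PVI_cleared, slope10, t10, y10, r10, y10_deriv, t10_deriv,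
    slope10_deriv, slope10_deriv_num, y10_deriv_num, t10_deriv_factor in *.
  field; neq0.
Qed.

End Curve10.

Lemma locally_is_derive_y10_t10 s :
  s <> 0 -> s <> 2 -> s^4 - 4*s^2 + 32*s - 28 <> 0 ->
  locally s (fun u => is_derive y10 u (y10_deriv u) /\ is_derive t10 u (t10_deriv u)).
Proof.
  intros Hs0 Hs2 HQ.
  assert (Hloc : locally s (fun u => u * (u - 2) * (u^4 - 4*u^2 + 32*u - 28) <> 0)).
  { apply (locally_neq0 (fun u => u * (u - 2) * (u^4 - 4*u^2 + 32*u - 28))).
    - apply (@ex_derive_continuous R_AbsRing R_NormedModule). auto_derive. exact I.
    - neq0. }
  revert Hloc. apply filter_imp. intros u Hu.
  assert (Hu0 : u <> 0) by (intro E; apply Hu; rewrite E; ring).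
  assert (Hu2 : u <> 2) by (intro E; apply Hu; rewrite E; ring).
  assert (HuQ : u^4 - 4*u^2 + 32*u - 28 <> 0) by (intro E; apply Hu; rewrite E; ring).
  split; [apply is_derive_y10 | apply is_derive_t10]; assumption.
Qed.

Theorem mainTheorem10 :
  forall s : R,
    s <> 0 -> s <> 2 ->
    s^4 - 4*s^2 + 32*s - 28 <> 0 ->
    s^2 + 4*s + 6 <> 0 ->
    Derive t10 s <> 0 ->
    t10 s <> 0 -> t10 s <> 1 ->
    y10 s <> 0 -> y10 s <> 1 -> y10 s <> t10 s ->
    PVI_param_holds (1/3) (1/2) (1/2) (2/3) t10 y10 s.
Proof.
  intros s Hs0 Hs2 HQ _ HdT Ht0 Ht1 Hy0 Hy1 Hyt.
  rewrite (is_derive_unique _ _ _ (is_derive_t10 s Hs0 Hs2)) in HdT.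
  assert (Hs1 : s + 1 <> 0).
  { intro E. apply HdT. unfold t10_deriv. rewrite E. unfold Rdiv. ring. }
  assert (HF : t10_deriv_factor s <> 0).
  { intro E. apply HdT. unfold t10_deriv. rewrite E. unfold Rdiv. ring. }
  assert (Hy2 : Derive (fun u => Derive y10 u / Derive t10 u) s = slope10_deriv s).
  { apply (Derive_ratio_Derive _ _ y10_deriv t10_deriv).
    - exact (locally_is_derive_y10_t10 s Hs0 Hs2 HQ).
    - apply is_derive_slope10; assumption. }
  unfold PVI_param_holds; cbv zeta.
  rewrite Hy2, (is_derive_unique _ _ _ (is_derive_y10 s Hs0 Hs2 HQ)),
    (is_derive_unique _ _ _ (is_derive_t10 s Hs0 Hs2)).
  apply PVI_rhs_of_cleared; auto.
  apply PVI_cleared10; assumption.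
Qed.
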